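(* Let $G=(V,E,I,\{s,t\})$ be a grapht (possibly infinite). Suppose that $s$ is linked and that every system of edge-disjoint $st$-paths that links $s$ uses the edge $e$, where $e\in E\setminus\delta(s)$. Let $C$ be the $\trianglelefteq$-smallest Erdős–Menger $st$-cut that contains $e$. Then $C$ is tight, i.e. every linkage of $s$ is orthogonal to $C$.
   Context: Graphs may have parallel edges but no loops; all paths are finite. A grapht $(V,E,I,T)$ is a graph with a set $T$ of at least two terminal vertices; here $T=\{s,t\}$, so $T$-paths are exactly $st$-paths (paths from $s$ to $t$). $\delta(X)$ is the set of edges with exactly one end in $X$, $\delta(x)=\delta(\{x\})$; a cut is a set $\delta(X)$. For disjoint $A,B\subseteq V$, an $AB$-path has one endpoint in $A$, the other in $B$, and no inner vertex in $A\cup B$; an $AB$-cut is a cut $C$ such that $G-C$ has no $AB$-path. An edge set $C$ is orthogonal to a system $\mathcal{P}$ of edge-disjoint paths if $C$ consists of exactly one edge from each $P\in\mathcal{P}$ (and no other edges). An Erdős–Menger $st$-cut is an $st$-cut orthogonal to some system of edge-disjoint $st$-paths. For Erdős–Menger $st$-cuts $C,C'$, write $C\trianglelefteq C'$ if for every $st$-path $P$, with $<_P$ the linear order of $E(P)$ in the direction from $s$ to $t$, $\min_{<_P}(C\cap E(P))\le\min_{<_P}(C'\cap E(P))$. A system of edge-disjoint $st$-paths links $s$ if it covers $\delta(s)$; it is a linkage of $s$ if it links $s$ and every path in it contains an edge of $\delta(s)$ (i.e. it is minimal with this property); $s$ is linked if some system links it. *)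

From Stdlib Require Import List.
Import ListNotations.

(* A graph (V, E, I): I is the incidence relation; every edge has exactly
   two distinct ends (no loops; parallel edges allowed). *)
Record graph := mkGraph {
  vtx : Type;
  edg : Type;
  inc : edg -> vtx -> Prop;
  inc_two : forall e, exists u v, u <> v /\ forall w, inc e w <-> (w = u \/ w = v)
}.

Section Defs.
Variable G : graph.
Local Notation inc := (inc G).
Notation V := (vtx G).
Notation E := (edg G).

Definition joins (e : E) (u v : V) : Prop := inc e u /\ inc e v /\ u <> v.

Definition delta (X : V -> Prop) (e : E) : Prop :=
  exists u v, inc e u /\ inc e v /\ X u /\ ~ X v.

Definition deltav (x : V) : E -> Prop := delta (fun w => w = x).

Definition is_cut (C : E -> Prop) : Prop :=
  exists X : V -> Prop, forall e, C e <-> delta X e.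

Record path := mkPath { pstart : V; psteps : list (E * V) }.

Fixpoint walk_ok (u : V) (l : list (E * V)) : Prop :=
  match l with
  | [] => True
  | (e, v) :: l' => joins e u v /\ walk_ok v l'
  end.

Definition pverts (P : path) : list V := pstart P :: map snd (psteps P).
Definition pedges (P : path) : list E := map fst (psteps P).
Definition pend (P : path) : V := last (pverts P) (pstart P).

Definition is_path (P : path) : Prop :=
  walk_ok (pstart P) (psteps P) /\ NoDup (pverts P).

Definition stpath (s t : V) (P : path) : Prop :=
  is_path P /\ pstart P = s /\ pend P = t.

Definition is_stcut (s t : V) (C : E -> Prop) : Prop :=
  is_cut C /\ forall P, stpath s t P -> exists e, In e (pedges P) /\ C e.

Definition ed_system (s t : V) (S : path -> Prop) : Prop :=
  (forall P, S P -> stpath s t P) /\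
  (forall P Q, S P -> S Q -> P <> Q ->
     forall e, In e (pedges P) -> ~ In e (pedges Q)).

Definition orthogonal (C : E -> Prop) (S : path -> Prop) : Prop :=
  (forall P, S P -> exists e, In e (pedges P) /\ C e /\
       forall e', In e' (pedges P) -> C e' -> e' = e) /\
  (forall e, C e -> exists P, S P /\ In e (pedges P)).

Definition EM_stcut (s t : V) (C : E -> Prop) : Prop :=
  is_stcut s t C /\ exists S, ed_system s t S /\ orthogonal C S.

(* i is the index (in the s-to-t order of E(P)) of min_{<_P} (C ∩ E(P)) *)
Definition is_first (C : E -> Prop) (P : path) (i : nat) : Prop :=
  exists e, nth_error (pedges P) i = Some e /\ C e /\
    forall j e', j < i -> nth_error (pedges P) j = Some e' -> ~ C e'.

Definition cut_le (s t : V) (C C' : E -> Prop) : Prop :=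
  forall P, stpath s t P ->
    forall i i', is_first C P i -> is_first C' P i' -> i <= i'.

Definition links (s t : V) (S : path -> Prop) : Prop :=
  ed_system s t S /\
  forall e, deltav s e -> exists P, S P /\ In e (pedges P).

Definition linkage (s t : V) (S : path -> Prop) : Prop :=
  links s t S /\
  forall P, S P -> exists e, In e (pedges P) /\ deltav s e.

Definition linked (s t : V) : Prop := exists S, links s t S.

Definition uses (S : path -> Prop) (e : E) : Prop :=
  exists P, S P /\ In e (pedges P).

Definition tight (s t : V) (C : E -> Prop) : Prop :=
  forall S, linkage s t S -> orthogonal C S.

End Defs.

(* Take the side [X] of [C = delta X] containing [s] and a system [S] to which
   [C] is orthogonal.  Given a linkage [L], continue every path of [L] after its
   first [C]-edge [f] along the path of [S] through [f]: the glued paths still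
   link [s], so one of them, [P0], uses [e].  Cut [P0] open at [e]; the vertices
   reachable from the tail of [e] in the residual graph do not include [t], since
   an augmenting walk to [t] would give a linking system avoiding [e].  So they
   span an Erdős–Menger cut [D] through [e], orthogonal to the glued system.
   Minimality gives [C ⊴ D], which forces every edge of [C] to be the first
   [C]-edge of a path of [L]; as the paths of [L] are edge-disjoint, each of them
   then meets [C] exactly once. *)

From Stdlib Require Import List Classical Lia.
Import ListNotations.

Section Graph.
Variable G : graph.
Local Notation V := (vtx G).
Local Notation E := (edg G).
Local Notation inc := (inc G).
Local Notation joins := (joins G).
Local Notation walk_ok := (walk_ok G).
Local Notation delta := (delta G).

Lemma joins_inc g a b c : joins g a b -> inc g c -> c = a \/ c = b.
Proof.
  intros [Ha [Hb Hab]] Hc.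
  destruct (inc_two G g) as [u [v [_ Hw]]].
  apply Hw in Ha; apply Hw in Hb; apply Hw in Hc.
  destruct Ha, Hb, Hc; subst; tauto.
Qed.

Lemma joins_sym g a b : joins g a b -> joins g b a.
Proof. intros [H1 [H2 H3]]; repeat split; auto. Qed.

Lemma joins_ends g a b a' b' : joins g a b -> joins g a' b' ->
  (a = a' /\ b = b') \/ (a = b' /\ b = a').
Proof.
  intros H H'.
  assert (Ha' : a' = a \/ a' = b) by (apply (joins_inc g); auto; apply H').
  assert (Hb' : b' = a \/ b' = b) by (apply (joins_inc g); auto; apply H').
  destruct H as [_ [_ Hab]], H' as [_ [_ Hab']].
  destruct Ha', Hb'; subst; tauto.
Qed.

Lemma joins_same_tail g a a' b : joins g a b -> joins g a' b -> a = a'.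
Proof.
  intros J J'. destruct (joins_ends g a b a' b J J') as [[-> _]|[-> ->]]; [reflexivity|].
  exfalso. apply J. reflexivity.
Qed.

Definition inside (Y : V -> Prop) (g : E) : Prop := forall w, inc g w -> Y w.
Definition outside (Y : V -> Prop) (g : E) : Prop := forall w, inc g w -> ~ Y w.

Lemma inside_outside Y g : inside Y g -> outside Y g -> False.
Proof.
  intros H1 H2. destruct (inc_two G g) as [u [v [_ Hw]]].
  assert (Hu : inc g u) by (apply Hw; auto). exact (H2 u Hu (H1 u Hu)).
Qed.

Lemma delta_not_inside Y g : delta Y g -> ~ inside Y g.
Proof. intros [u [v [_ [Hv [_ Nv]]]]] H. exact (Nv (H v Hv)). Qed.

Lemma delta_not_outside Y g : delta Y g -> ~ outside Y g.
Proof. intros [u [v [Hu [_ [Yu _]]]]] H. exact (H u Hu Yu). Qed.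

Lemma joins_inside Y g a b : joins g a b -> Y a -> Y b -> inside Y g.
Proof. intros J Ya Yb w Hw. destruct (joins_inc g a b w J Hw) as [-> | ->]; auto. Qed.

Lemma joins_delta Y g a b : joins g a b -> Y a -> ~ Y b -> delta Y g.
Proof. intros [Ha [Hb _]] Ya Nb. exists a, b. auto. Qed.

Lemma delta_compl Y h : delta Y h <-> delta (fun w => ~ Y w) h.
Proof.
  split; intros [a [b [Ha [Hb [Ya Nb]]]]];
    exists b, a; repeat split; auto; apply NNPP; exact Nb.
Qed.

(** ** Walks *)

Fixpoint walk_end (x : V) (l : list (E * V)) : V :=
  match l with
  | [] => x
  | (_, y) :: l' => walk_end y l'
  end.

Definition walk_verts (x : V) (l : list (E * V)) : list V := x :: map snd l.

Definition edges_avoid (C : E -> Prop) (l : list (E * V)) : Prop :=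
  forall h, In h (map fst l) -> ~ C h.

Lemma walk_end_app x l m : walk_end x (l ++ m) = walk_end (walk_end x l) m.
Proof. revert x; induction l as [|[h y] l IH]; intros x; simpl; auto. Qed.

Lemma walk_end_rcons x l h y : walk_end x (l ++ [(h, y)]) = y.
Proof. rewrite walk_end_app. reflexivity. Qed.

Lemma walk_end_in x l : In (walk_end x l) (walk_verts x l).
Proof.
  revert x; induction l as [|[h y] l IH]; intros x; [left; reflexivity|].
  right. apply IH.
Qed.

Lemma walk_ok_app x l m :
  walk_ok x (l ++ m) <-> walk_ok x l /\ walk_ok (walk_end x l) m.
Proof. revert x; induction l as [|[h y] l IH]; intros x; simpl; [tauto|rewrite IH; tauto]. Qed.

Lemma walk_verts_app x l m : walk_verts x (l ++ m) = walk_verts x l ++ map snd m.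
Proof. unfold walk_verts. rewrite map_app. reflexivity. Qed.

Lemma in_edges_app_l (l m : list (E * V)) h : In h (map fst l) -> In h (map fst (l ++ m)).
Proof. intros H. rewrite map_app. apply in_or_app. auto. Qed.

Lemma in_edges_app_r (l m : list (E * V)) h : In h (map fst m) -> In h (map fst (l ++ m)).
Proof. intros H. rewrite map_app. apply in_or_app. auto. Qed.

Lemma NoDup_app_disjoint {A : Type} (l m : list A) a : NoDup (l ++ m) -> In a l -> ~ In a m.
Proof.
  induction l as [|b l IH]; simpl; intros N Hl Hm; [contradiction|].
  apply NoDup_cons_iff in N as [N1 N]. destruct Hl as [<-|Hl].
  - apply N1. apply in_or_app; auto.
  - eapply IH; eauto.
Qed.

Lemma walk_prefix_at x l y : In y (walk_verts x l) ->
  exists l1 l2, l = l1 ++ l2 /\ walk_end x l1 = y.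
Proof.
  revert x; induction l as [|[h z] l IH]; intros x [<-|Hin].
  - exists [], []; auto.
  - contradiction.
  - exists [], ((h, z) :: l); auto.
  - destruct (IH z Hin) as [l1 [l2 [-> <-]]]. exists ((h, z) :: l1), l2; auto.
Qed.

Lemma walk_prefix_ok x l1 l2 : walk_ok x (l1 ++ l2) -> NoDup (walk_verts x (l1 ++ l2)) ->
  walk_ok x l1 /\ NoDup (walk_verts x l1).
Proof.
  intros W N. apply walk_ok_app in W. rewrite walk_verts_app in N.
  split; [tauto|eapply NoDup_app_remove_r; eauto].
Qed.

Lemma walk_last_within (Y : V -> Prop) x l : Y x ->
  exists l1 l2, l = l1 ++ l2 /\ Y (walk_end x l1) /\ forall w, In w (map snd l2) -> ~ Y w.
Proof.
  intros Yx. induction l as [|[h y] l IH] using rev_ind.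
  - exists [], []. simpl. auto.
  - destruct (classic (Y y)) as [Yy|Ny].
    + exists (l ++ [(h, y)]), []. rewrite app_nil_r, walk_end_rcons. simpl; auto.
    + destruct IH as [l1 [l2 [-> [H1 H2]]]].
      exists l1, (l2 ++ [(h, y)]). rewrite app_assoc. repeat split; auto.
      intros w. rewrite map_app, in_app_iff. intros [Hw|[<-|[]]]; auto.
Qed.

Lemma first_split (C : E -> Prop) (l : list (E * V)) : (exists h, In h (map fst l) /\ C h) ->
  exists l1 f y l2, l = l1 ++ (f, y) :: l2 /\ C f /\ edges_avoid C l1.
Proof.
  induction l as [|[h y] l IH]; intros [h0 [Hin Ch]]; simpl in Hin; [contradiction|].
  destruct (classic (C h)) as [Cy|Cn].
  - exists [], h, y, l. split; [reflexivity|split; [auto|intros ? []]].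
  - destruct Hin as [->|Hin]; [contradiction|].
    destruct IH as [l1 [f [y' [l2 [-> [Cf Hn]]]]]]; eauto.
    exists ((h, y) :: l1), f, y', l2. split; [reflexivity|split; auto].
    intros h' [<-|Hh]; auto.
Qed.

Lemma first_split_unique (C : E -> Prop) (l1 : list (E * V)) f y l2 l1' f' y' l2' :
  l1 ++ (f, y) :: l2 = l1' ++ (f', y') :: l2' -> C f -> C f' ->
  edges_avoid C l1 -> edges_avoid C l1' ->
  l1 = l1' /\ f = f' /\ y = y' /\ l2 = l2'.
Proof.
  revert l1'; induction l1 as [|[h z] l1 IH]; intros l1' Heq Cf Cf' N N';
  destruct l1' as [|[h' z'] l1']; simpl in Heq; injection Heq.
  - intros; subst; auto.
  - intros _ E1 E2. exfalso. apply (N' f); simpl; auto.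
  - intros _ E1 E2. exfalso. apply (N f'); simpl; auto.
  - intros E0 E1 E2. subst h' z'. destruct (IH l1') as [-> [-> [-> ->]]]; auto.
    + intros k Hk; apply N; simpl; auto.
    + intros k Hk; apply N'; simpl; auto.
Qed.

Lemma split_compare {A : Type} (l1 l2 m1 m2 : list A) x y :
  l1 ++ x :: l2 = m1 ++ y :: m2 -> length l1 <= length m1 ->
  (x = y /\ l2 = m2) \/ exists k, m1 = l1 ++ x :: k /\ l2 = k ++ y :: m2.
Proof.
  revert m1; induction l1 as [|a l1 IH]; intros m1 Heq Hl; destruct m1 as [|b m1];
  simpl in *; injection Heq; intros; subst.
  - left; auto.
  - right. exists m1. auto.
  - lia.
  - destruct (IH m1) as [Hq|[k [-> ->]]]; auto; [lia|]. right. exists k. auto.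
Qed.

Inductive walk_arc : V -> list (E * V) -> V -> E -> V -> Prop :=
| walk_arc_here x h y l : walk_arc x ((h, y) :: l) x h y
| walk_arc_later x h' y l a h b : walk_arc y l a h b -> walk_arc x ((h', y) :: l) a h b.

Lemma walk_arc_app x l m a h b :
  walk_arc x (l ++ m) a h b <-> walk_arc x l a h b \/ walk_arc (walk_end x l) m a h b.
Proof.
  revert x; induction l as [|[h' y] l IH]; intros x; simpl.
  - split; [tauto|]. intros [H|H]; [inversion H|exact H].
  - split.
    + intros H. inversion H as [|? ? ? ? ? ? ? Hr]; subst.
      * left; constructor.
      * apply IH in Hr as [Hr|Hr]; [left; constructor; auto|right; auto].
    + intros [H|H].
      * inversion H; subst; constructor. apply IH. auto.
      * constructor. apply IH. auto.
Qed.

Lemma walk_arc_cons_inv x h' y l a h b : walk_arc x ((h', y) :: l) a h b ->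
  (a = x /\ h = h' /\ b = y) \/ walk_arc y l a h b.
Proof. intros H. inversion H; subst; auto. Qed.

Lemma walk_arc_joins x l a h b : walk_ok x l -> walk_arc x l a h b -> joins h a b.
Proof. intros W H; induction H; simpl in W; tauto. Qed.

Lemma walk_arc_edge x l a h b : walk_arc x l a h b -> In h (map fst l).
Proof. intros H; induction H; simpl; auto. Qed.

Lemma walk_arc_tail x l a h b : walk_arc x l a h b -> In a (walk_verts x l).
Proof. intros H; induction H; unfold walk_verts in *; simpl in *; auto. Qed.

Lemma walk_arc_head x l a h b : walk_arc x l a h b -> In b (map snd l).
Proof. intros H; induction H; simpl in *; auto. Qed.

Lemma walk_arc_head_verts x l a h b : walk_arc x l a h b -> In b (walk_verts x l).
Proof. intros H; right; eapply walk_arc_head; eauto. Qed.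

Lemma in_walk_arc x l h : In h (map fst l) -> exists a b, walk_arc x l a h b.
Proof.
  revert x; induction l as [|[h' y] l IH]; intros x Hin; [contradiction|].
  destruct Hin as [<-|Hin].
  - exists x, y. constructor.
  - destruct (IH y Hin) as [a [b Hab]]. exists a, b. constructor; auto.
Qed.

Lemma walk_arc_split x l a h b :
  walk_arc x l a h b <-> exists l1 l2, l = l1 ++ (h, b) :: l2 /\ walk_end x l1 = a.
Proof.
  split.
  - intros H; induction H.
    + exists [], l; auto.
    + destruct IHwalk_arc as [l1 [l2 [-> <-]]]. exists ((h', y) :: l1), l2. auto.
  - intros [l1 [l2 [-> <-]]]. apply walk_arc_app. right. constructor.
Qed.

Lemma walk_edges_NoDup x l : walk_ok x l -> NoDup (walk_verts x l) -> NoDup (map fst l).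
Proof.
  revert x; induction l as [|[h y] l IH]; intros x W N; simpl in *; [constructor|].
  destruct W as [J W]. apply NoDup_cons_iff in N as [Nx N].
  constructor; [|apply (IH y); auto].
  intros Hin. destruct (in_walk_arc y l h Hin) as [a [b Hab]].
  destruct (joins_ends _ _ _ _ _ J (walk_arc_joins _ _ _ _ _ W Hab)) as [[-> ->]|[-> ->]].
  - exact (Nx (walk_arc_tail _ _ _ _ _ Hab)).
  - exact (Nx (walk_arc_head_verts _ _ _ _ _ Hab)).
Qed.

Lemma walk_arc_unique x l a h b a' b' : NoDup (map fst l) ->
  walk_arc x l a h b -> walk_arc x l a' h b' -> a = a' /\ b = b'.
Proof.
  intros N H; revert a' b'; induction H; intros a' b' H'; simpl in N;
  apply NoDup_cons_iff in N as [Nh N];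
  inversion H' as [|? ? ? ? ? ? ? Hr]; subst; auto;
  exfalso; apply Nh; eapply walk_arc_edge; eauto.
Qed.

Lemma walk_forward (Y : V -> Prop) x l :
  (forall a h b, walk_arc x l a h b -> Y a -> Y b) -> Y x ->
  forall w, In w (walk_verts x l) -> Y w.
Proof.
  revert x; induction l as [|[h y] l IH]; intros x Hs Yx w [<-|Hw]; auto; [contradiction|].
  apply (IH y); auto.
  - intros a h' b Hab. apply (Hs a h' b). constructor; auto.
  - apply (Hs x h y); auto. constructor.
Qed.

Lemma walk_backward (Y : V -> Prop) x l :
  (forall a h b, walk_arc x l a h b -> Y b -> Y a) -> Y (walk_end x l) ->
  forall w, In w (walk_verts x l) -> Y w.
Proof.
  revert x; induction l as [|[h y] l IH]; intros x Hs Ye w Hw.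
  - destruct Hw as [<-|[]]. exact Ye.
  - assert (Hall : forall w, In w (walk_verts y l) -> Y w).
    { apply IH; auto. intros a h' b Hab. apply (Hs a h' b). constructor; auto. }
    destruct Hw as [<-|Hw]; [|exact (Hall w Hw)].
    apply (Hs x h y); [constructor|]. apply Hall. left; auto.
Qed.

Lemma walk_crossing (Y : V -> Prop) x l : Y x -> ~ Y (walk_end x l) ->
  exists a h b, walk_arc x l a h b /\ Y a /\ ~ Y b.
Proof.
  intros Yx NY. apply NNPP. intros H. apply NY.
  apply (walk_forward Y x l); auto; [|apply walk_end_in].
  intros a h b Hab Ya. apply NNPP. intros Nb. apply H. exists a, h, b; auto.
Qed.

Lemma walk_within (Y : V -> Prop) x l : walk_ok x l -> Y x -> edges_avoid (delta Y) l ->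
  forall w, In w (walk_verts x l) -> Y w.
Proof.
  intros W Yx N. apply walk_forward; auto.
  intros a h b Hab Ya. apply NNPP. intros Nb. apply (N h (walk_arc_edge _ _ _ _ _ Hab)).
  exact (joins_delta Y h a b (walk_arc_joins _ _ _ _ _ W Hab) Ya Nb).
Qed.

Lemma walk_inside (Y : V -> Prop) x l a g b : walk_ok x l ->
  (forall w, In w (walk_verts x l) -> Y w) -> walk_arc x l a g b -> inside Y g.
Proof.
  intros W H Hw. apply (joins_inside Y g a b).
  - eapply walk_arc_joins; eauto.
  - apply H. eapply walk_arc_tail; eauto.
  - apply H. eapply walk_arc_head_verts; eauto.
Qed.

Lemma walk_single_crossing (Y : V -> Prop) x l : walk_ok x l ->
  (forall a h b, walk_arc x l a h b -> Y b -> Y a) -> Y x -> ~ Y (walk_end x l) ->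
  exists h, In h (map fst l) /\ delta Y h /\
    forall h', In h' (map fst l) -> delta Y h' -> h' = h.
Proof.
  intros W Hback Yx Nt.
  destruct (walk_crossing Y x l Yx Nt) as [a [h [b [Hab [Ya Nb]]]]].
  exists h. split; [eapply walk_arc_edge; eauto|].
  split; [exact (joins_delta Y h a b (walk_arc_joins _ _ _ _ _ W Hab) Ya Nb)|].
  apply walk_arc_split in Hab as [p1 [p2 [-> Ea]]].
  apply walk_ok_app in W as [W1 [_ W2]].
  assert (Hin : forall w, In w (walk_verts x p1) -> Y w).
  { apply walk_backward; [|rewrite Ea; exact Ya].
    intros a' h' b' H. apply (Hback a' h' b'). apply walk_arc_app. left. exact H. }
  assert (Hout : forall w, In w (walk_verts b p2) -> ~ Y w).
  { apply (walk_forward (fun w => ~ Y w)); [|exact Nb].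
    intros a' h' b' H Na' Yb'. apply Na'. apply (Hback a' h' b'); [|exact Yb'].
    apply walk_arc_app. right. rewrite Ea. constructor. exact H. }
  intros h' Hh' Dh'. rewrite map_app in Hh'. apply in_app_or in Hh' as [H1|[<-|H1]];
    [exfalso| reflexivity|exfalso].
  - destruct (in_walk_arc x p1 h' H1) as [a' [b' H2]].
    exact (delta_not_inside Y h' Dh' (walk_inside Y x p1 a' h' b' W1 Hin H2)).
  - destruct (in_walk_arc b p2 h' H1) as [a' [b' H2]].
    exact (delta_not_outside Y h' Dh' (walk_inside _ b p2 a' h' b' W2 Hout H2)).
Qed.

Local Notation path := (path G).
Local Notation pstart := (pstart G).
Local Notation psteps := (psteps G).
Local Notation pedges := (pedges G).
Local Notation pverts := (pverts G).
Local Notation pend := (pend G).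
Local Notation is_path := (is_path G).

Definition path_arc (P : path) a h b : Prop := walk_arc (pstart P) (psteps P) a h b.

Lemma pend_walk_end P : pend P = walk_end (pstart P) (psteps P).
Proof.
  unfold pend, pverts. generalize (pstart P) at 2 as d.
  generalize (pstart P); induction (psteps P) as [|[h y] l IH]; intros x d; simpl; auto.
  rewrite <- (IH y d). destruct l; reflexivity.
Qed.

Lemma path_arc_edge P a h b : path_arc P a h b -> In h (pedges P).
Proof. apply walk_arc_edge. Qed.

Lemma path_edges_NoDup P : is_path P -> NoDup (pedges P).
Proof. intros [W N]. eapply walk_edges_NoDup; eauto. Qed.

Lemma path_inner_not_start P w : is_path P -> In w (map snd (psteps P)) -> w <> pstart P.
Proof.
  intros [_ N] H ->. unfold pverts in N. apply NoDup_cons_iff in N as [N _]. exact (N H).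
Qed.

Lemma path_start_edge P h l1 l2 : is_path P -> In h (pedges P) -> deltav G (pstart P) h ->
  psteps P = l1 ++ l2 -> walk_end (pstart P) l1 <> pstart P -> In h (map fst l1).
Proof.
  intros HP Hin [u [v [Hu [_ [-> _]]]]] El Hl1.
  destruct (in_walk_arc (pstart P) (psteps P) h Hin) as [a [b Hab]].
  assert (Nb : b <> pstart P) by (apply (path_inner_not_start P b HP); eapply walk_arc_head; eauto).
  destruct (joins_inc h a b _ (walk_arc_joins _ _ _ _ _ (proj1 HP) Hab) Hu) as [Ea|]; [|congruence].
  apply walk_arc_split in Hab as [[|[h1 y1] k1] [k2 [Ek Eka]]].
  - rewrite Ek in El. destruct l1 as [|p l1]; [now elim Hl1|].
    injection El as <- _. left; reflexivity.
  - exfalso. apply (path_inner_not_start P a HP); [|congruence].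
    rewrite Ek, map_app. apply in_or_app. left. simpl in Eka |- *. rewrite <- Eka.
    apply walk_end_in.
Qed.

Lemma prefix_is_path P l1 l2 : is_path P -> psteps P = l1 ++ l2 ->
  is_path (mkPath G (pstart P) l1).
Proof.
  intros [W N] El. change (NoDup (walk_verts (pstart P) (psteps P))) in N.
  rewrite El in W, N. exact (walk_prefix_ok _ _ _ W N).
Qed.

Lemma extend_is_path P g y : is_path P -> joins g (pend P) y -> ~ In y (pverts P) ->
  is_path (mkPath G (pstart P) (psteps P ++ [(g, y)])).
Proof.
  intros [W N] J Hy. split.
  - simpl. apply walk_ok_app. rewrite <- pend_walk_end. simpl. tauto.
  - change (NoDup (walk_verts (pstart P) (psteps P ++ [(g, y)]))). rewrite walk_verts_app.
    apply NoDup_app; [exact N|repeat constructor; auto|]. intros w Hw [<-|[]]. exact (Hy Hw).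
Qed.

Lemma is_first_split (D : E -> Prop) P l1 f y l2 :
  psteps P = l1 ++ (f, y) :: l2 -> D f -> edges_avoid D l1 -> is_first G D P (length l1).
Proof.
  intros EP Df N. exists f. unfold pedges. rewrite EP, map_app. split; [|split; [exact Df|]].
  - rewrite nth_error_app2; rewrite length_map; [|lia].
    replace (length l1 - length l1) with 0 by lia. reflexivity.
  - intros j h Hj Hn. rewrite nth_error_app1 in Hn; [|rewrite length_map; lia].
    apply N. eapply nth_error_In; eauto.
Qed.

Lemma splice_stpath s t D Q d1 d2 q1 q2 :
  is_path D -> pstart D = s -> psteps D = d1 ++ d2 ->
  stpath G s t Q -> psteps Q = q1 ++ q2 -> walk_end s d1 = walk_end s q1 ->
  (forall w, In w (walk_verts s d1) -> ~ In w (map snd q2)) ->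
  stpath G s t (mkPath G s (d1 ++ q2)).
Proof.
  intros [WD ND] SD ED [[WQ NQ] [SQ EQ]] EQs Emeet Hdisj.
  change (NoDup (walk_verts (pstart D) (psteps D))) in ND.
  change (NoDup (walk_verts (pstart Q) (psteps Q))) in NQ.
  rewrite SD, ED in WD, ND. rewrite SQ, EQs in WQ, NQ.
  apply walk_ok_app in WD, WQ. rewrite walk_verts_app in ND, NQ.
  split; [split|split]; simpl.
  - apply walk_ok_app. rewrite Emeet. tauto.
  - change (NoDup (walk_verts s (d1 ++ q2))). rewrite walk_verts_app.
    apply NoDup_app; auto.
    + eapply NoDup_app_remove_r; eauto.
    + eapply NoDup_app_remove_l; eauto.
  - reflexivity.
  - rewrite pend_walk_end, <- EQ, pend_walk_end, SQ, EQs. simpl.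
    rewrite !walk_end_app, Emeet. reflexivity.
Qed.

(** ** Augmenting along residual walks *)

Section Augment.
Variables s t : V.
Variable e : E.
Hypothesis s_neq_t : s <> t.

(* [residual U a b h]: the residual graph of [U] with [e] deleted has an arc
   [a -> b] through [h]: either [h] is unused by [U], or a path of [U]
   traverses [h] from [b] to [a]. *)
Definition residual (U : path -> Prop) (a b : V) (h : E) : Prop :=
  joins h a b /\ h <> e /\
  ((forall P, U P -> ~ In h (pedges P)) \/ (exists P, U P /\ path_arc P b h a)).

Definition residual_walk (U : path -> Prop) (x : V) (W : list (E * V)) : Prop :=
  forall a h b, walk_arc x W a h b -> residual U a b h.

Definition edge_disjoint (U : path -> Prop) : Prop :=
  forall P Q, U P -> U Q -> P <> Q -> forall g, In g (pedges P) -> ~ In g (pedges Q).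

Definition covers_start (U : path -> Prop) : Prop :=
  forall h, deltav G s h -> exists P, U P /\ In h (pedges P).

(* A system linking [s] and avoiding [e], except that its path [D] is still
   open: it runs from [s] to [x] only. *)
Record partial_linkage (U : path -> Prop) (D : path) (x : V) : Prop := {
  open_in : U D;
  open_path : is_path D;
  open_start : pstart D = s;
  open_end : pend D = x;
  closed_stpath : forall P, U P -> P <> D -> stpath G s t P;
  pl_disjoint : edge_disjoint U;
  pl_covers : covers_start U;
  pl_avoids : forall P, U P -> ~ In e (pedges P) }.

Lemma partial_linkage_path U D x P : partial_linkage U D x -> U P -> is_path P.
Proof.
  intros I UP. destruct (classic (P = D)) as [->|N]; [exact (open_path _ _ _ I)|].
  apply (closed_stpath _ _ _ I P UP N).
Qed.

Lemma partial_linkage_start U D x P : partial_linkage U D x -> U P -> pstart P = s.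
Proof.
  intros I UP. destruct (classic (P = D)) as [->|N]; [exact (open_start _ _ _ I)|].
  apply (closed_stpath _ _ _ I P UP N).
Qed.

Lemma partial_linkage_links U D : partial_linkage U D t -> links G s t U /\ ~ uses G U e.
Proof.
  intros I. split; [split; [split|]|].
  - intros P UP. destruct (classic (P = D)) as [->|N]; [|exact (closed_stpath _ _ _ I P UP N)].
    split; [apply I|split; apply I].
  - apply (pl_disjoint _ _ _ I).
  - apply (pl_covers _ _ _ I).
  - intros [P [UP HP]]. exact (pl_avoids _ _ _ I P UP HP).
Qed.

(* A residual walk to [t] never returns to [s]: every edge at [s] is used
   forwards by [U]. *)
Lemma residual_walk_not_s U D x g y W : partial_linkage U D x ->
  residual_walk U x ((g, y) :: W) -> walk_end y W = t -> y <> s.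
Proof.
  intros I Hr Ht ->. destruct W as [|[g' z] W]; [exact (s_neq_t Ht)|].
  destruct (Hr s g' z) as [J [_ R]]; [do 2 constructor|].
  destruct (pl_covers _ _ _ I g') as [P [UP HP]].
  { apply (joins_delta _ g' s z J); [reflexivity|intros Ez; apply (proj2 (proj2 J)); auto]. }
  destruct R as [Hun|[Q [UQ HQ]]]; [exact (Hun P UP HP)|].
  apply (path_inner_not_start Q s (partial_linkage_path _ _ _ Q I UQ)).
  - eapply walk_arc_head; eauto.
  - symmetry. exact (partial_linkage_start _ _ _ Q I UQ).
Qed.

Lemma residual_walk_fresh U x g y W a h b : residual_walk U x ((g, y) :: W) ->
  NoDup (walk_verts x ((g, y) :: W)) -> walk_arc y W a h b -> h <> g.
Proof.
  intros Hr N Hw ->.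
  destruct (Hr x g y) as [J _]; [constructor|].
  assert (J2 : joins g a b) by (apply (Hr a g b); constructor; auto).
  apply NoDup_cons_iff in N as [Nx _].
  destruct (joins_ends _ _ _ _ _ J J2) as [[-> _]|[-> _]]; apply Nx.
  - exact (walk_arc_tail _ _ _ _ _ Hw).
  - right. exact (walk_arc_head _ _ _ _ _ Hw).
Qed.

Lemma residual_reroute U U' g a b h :
  (forall R, U' R -> forall a h b, path_arc R a h b -> h = g \/ exists Q, U Q /\ path_arc Q a h b) ->
  edge_disjoint U -> (forall P, U P -> is_path P) ->
  h <> g -> residual U a b h -> residual U' a b h.
Proof.
  intros Harc Hd Hp Hg [J [He Hr]]. split; [exact J|split; [exact He|]].
  destruct (classic (exists R, U' R /\ In h (pedges R))) as [[R [UR Hin]]|Hno].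
  - right. exists R. split; [exact UR|].
    destruct (in_walk_arc (pstart R) (psteps R) h Hin) as [a' [b' Ha']].
    destruct (Harc R UR a' h b' Ha') as [Eh|[Q [UQ HQ]]]; [congruence|].
    destruct Hr as [Hun|[P [UP HP]]].
    + exfalso. apply (Hun Q UQ). eapply path_arc_edge; eauto.
    + destruct (classic (P = Q)) as [<-|NPQ].
      * destruct (walk_arc_unique _ _ _ _ _ _ _ (path_edges_NoDup P (Hp P UP)) HP HQ) as [<- <-].
        exact Ha'.
      * exfalso. apply (Hd P Q UP UQ NPQ h); eapply path_arc_edge; eauto.
  - left. intros R UR Hin. apply Hno. eauto.
Qed.

Definition reroute (U Old New : path -> Prop) (R : path) : Prop := (U R /\ ~ Old R) \/ New R.

Lemma edge_disjoint_reroute U Old New :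
  edge_disjoint U -> (forall O, Old O -> U O) -> edge_disjoint New ->
  (forall N h, New N -> In h (pedges N) ->
     (exists O, Old O /\ In h (pedges O)) \/ forall P, U P -> ~ In h (pedges P)) ->
  edge_disjoint (reroute U Old New).
Proof.
  intros Hd HO HN Hsrc.
  assert (Hmix : forall P N h, U P -> ~ Old P -> New N -> In h (pedges P) -> ~ In h (pedges N)).
  { intros P N h UP NP NN H1 H2. destruct (Hsrc N h NN H2) as [[O [OO HOh]]|Hun].
    - refine (Hd P O UP (HO O OO) _ h H1 HOh). intros ->. exact (NP OO).
    - exact (Hun P UP H1). }
  intros P Q [[UP OP]|NP] [[UQ OQ]|NQ] NPQ h H1 H2.
  - exact (Hd P Q UP UQ NPQ h H1 H2).
  - exact (Hmix P Q h UP OP NQ H1 H2).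
  - exact (Hmix Q P h UQ OQ NP H2 H1).
  - exact (HN P Q NP NQ NPQ h H1 H2).
Qed.

Lemma edge_disjoint_single D : edge_disjoint (fun R => R = D).
Proof. intros P Q -> -> N. congruence. Qed.

Definition arcs_from (U Old New : path -> Prop) (g : E) : Prop :=
  forall N, New N -> forall a h b, path_arc N a h b ->
    (exists O, Old O /\ path_arc O a h b) \/ (h = g /\ forall P, U P -> ~ In g (pedges P)).

Lemma arcs_from_edge U Old New g N h : arcs_from U Old New g -> New N -> In h (pedges N) ->
  (exists O, Old O /\ In h (pedges O)) \/ (h = g /\ forall P, U P -> ~ In g (pedges P)).
Proof.
  intros Harc NN Hh. destruct (in_walk_arc (pstart N) (psteps N) h Hh) as [a [b Hab]].
  destruct (Harc N NN a h b Hab) as [[O [OO HO]]|Hg]; [left|right; exact Hg].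
  exists O. split; [exact OO|eapply path_arc_edge; eauto].
Qed.

Section Reroute.
Variables (U : path -> Prop) (D : path) (x : V) (g : E) (y : V) (W : list (E * V)).
Hypothesis I : partial_linkage U D x.
Hypothesis Hres : residual_walk U x ((g, y) :: W).
Hypothesis Huniq : NoDup (walk_verts x ((g, y) :: W)).
Hypothesis y_neq_s : y <> s.

Lemma residual_walk_reroute Old New : (forall O, Old O -> U O) -> arcs_from U Old New g ->
  residual_walk (reroute U Old New) y W.
Proof.
  intros HO Harc a h b Hw. apply (residual_reroute U _ g).
  - intros R [[UR _]|NR] a' h' b' Ha'; [right; exists R; auto|].
    destruct (Harc R NR a' h' b' Ha') as [[O [OO HO']]|[Eg _]]; [right|left; exact Eg].
    exists O; auto.
  - apply I.
  - intros P UP. exact (partial_linkage_path _ _ _ P I UP).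
  - eapply residual_walk_fresh; eauto.
  - apply Hres. constructor. exact Hw.
Qed.

Lemma partial_linkage_reroute (Old New : path -> Prop) D' :
  Old D -> (forall O, Old O -> U O) -> arcs_from U Old New g -> edge_disjoint New ->
  (forall h O, deltav G s h -> Old O -> In h (pedges O) -> exists N, New N /\ In h (pedges N)) ->
  New D' -> is_path D' -> pstart D' = s -> pend D' = y ->
  (forall N, New N -> N <> D' -> stpath G s t N) ->
  partial_linkage (reroute U Old New) D' y /\ residual_walk (reroute U Old New) y W.
Proof.
  intros OD HO Harc HN Hcov ND' PD' SD' ED' Hst.
  split; [constructor|exact (residual_walk_reroute Old New HO Harc)].
  - right; exact ND'.
  - exact PD'.
  - exact SD'.
  - exact ED'.
  - intros R [[UR NR]|NR] NRD; [|exact (Hst R NR NRD)].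
    apply (closed_stpath _ _ _ I R UR). congruence.
  - apply edge_disjoint_reroute; [apply I|exact HO|exact HN|].
    intros N h NN Hh. destruct (arcs_from_edge U Old New g N h Harc NN Hh) as [Ho|[-> Hun]]; auto.
  - intros h Hh. destruct (pl_covers _ _ _ I h Hh) as [P [UP HP]].
    destruct (classic (Old P)) as [OP|NP].
    + destruct (Hcov h P Hh OP HP) as [N [NN HN']]. exists N. split; [right|]; auto.
    + exists P. split; [left|]; auto.
  - intros R [[UR _]|NR] HR; [exact (pl_avoids _ _ _ I R UR HR)|].
    destruct (arcs_from_edge U Old New g R e Harc NR HR) as [[O [OO HOe]]|[Eg _]].
    + exact (pl_avoids _ _ _ I O (HO O OO) HOe).
    + destruct (Hres x g y) as [_ [Hge _]]; [constructor|congruence].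
Qed.

Lemma reroute_truncate : In y (pverts D) ->
  exists U' D', partial_linkage U' D' y /\ residual_walk U' y W.
Proof.
  intros Hy. pose proof (open_path _ _ _ I) as PD. pose proof (open_start _ _ _ I) as SD.
  destruct (walk_prefix_at (pstart D) (psteps D) y Hy) as [l1 [l2 [El Ey]]].
  set (D' := mkPath G s l1).
  exists (reroute U (fun R => R = D) (fun R => R = D')), D'.
  apply partial_linkage_reroute.
  - reflexivity.
  - intros O ->. apply I.
  - intros N -> a h b Hab. left. exists D. split; [reflexivity|].
    unfold path_arc. rewrite El, SD. apply walk_arc_app. left. exact Hab.
  - apply edge_disjoint_single.
  - intros h O Hh -> HO. exists D'. split; [reflexivity|].
    apply (path_start_edge D h l1 l2 PD HO); [rewrite SD; exact Hh|exact El|].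
    rewrite Ey, SD. exact y_neq_s.
  - reflexivity.
  - unfold D'. rewrite <- SD. exact (prefix_is_path D l1 l2 PD El).
  - reflexivity.
  - rewrite pend_walk_end. simpl. rewrite <- SD. exact Ey.
  - intros N -> N'. contradiction.
Qed.

Lemma reroute_extend : ~ In y (pverts D) -> (forall P, U P -> ~ In g (pedges P)) ->
  exists U' D', partial_linkage U' D' y /\ residual_walk U' y W.
Proof.
  intros Hy Hun. pose proof (open_path _ _ _ I) as PD. pose proof (open_start _ _ _ I) as SD.
  set (D' := mkPath G s (psteps D ++ [(g, y)])).
  exists (reroute U (fun R => R = D) (fun R => R = D')), D'.
  apply partial_linkage_reroute.
  - reflexivity.
  - intros O ->. apply I.
  - intros N -> a h b Hab. unfold path_arc in Hab. simpl in Hab.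
    apply walk_arc_app in Hab as [Hab|Hab].
    + left. exists D. split; [reflexivity|]. unfold path_arc. rewrite SD. exact Hab.
    + right. destruct (walk_arc_cons_inv _ _ _ _ _ _ _ Hab) as [(_ & -> & _)|Hr];
        [auto|inversion Hr].
  - apply edge_disjoint_single.
  - intros h O Hh -> HO. exists D'. split; [reflexivity|]. apply in_edges_app_l. exact HO.
  - reflexivity.
  - unfold D'. rewrite <- SD. apply extend_is_path; auto.
    rewrite (open_end _ _ _ I). apply Hres. constructor.
  - reflexivity.
  - rewrite pend_walk_end. apply walk_end_rcons.
  - intros N -> N'. contradiction.
Qed.

(* The walk enters [P] backwards at [x] and leaves it at [y]: [D] is closed by
   its prefix up to [z], the last vertex of [P] after [x] lying on [D], followed
   by the tail of [P] from [z]; the prefix of [P] up to [y] becomes the new open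
   path. *)
Section Swap.
Variables (P : path) (l1 m1 m2 d1 d2 : list (E * V)).
Hypothesis UP : U P.
Hypothesis P_neq_D : P <> D.
Hypothesis P_steps : psteps P = (l1 ++ (g, x) :: m1) ++ m2.
Hypothesis l1_end : walk_end s l1 = y.
Hypothesis D_steps : psteps D = d1 ++ d2.
Hypothesis d1_end : walk_end s d1 = walk_end x m1.
Hypothesis m2_off_D : forall w, In w (map snd m2) -> ~ In w (pverts D).

Let closed := mkPath G s (d1 ++ m2).
Let opened := mkPath G s l1.

Lemma swap_P_stpath : stpath G s t P.
Proof. exact (closed_stpath _ _ _ I P UP P_neq_D). Qed.

Lemma swap_meet_not_s : walk_end x m1 <> s.
Proof.
  destruct swap_P_stpath as [PP [SP _]]. rewrite <- SP.
  apply (path_inner_not_start P _ PP). rewrite P_steps, <- app_assoc, map_app.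
  apply in_or_app. right.
  change (In (walk_end x m1) (walk_verts x (m1 ++ m2))). rewrite walk_verts_app.
  apply in_or_app. left. apply walk_end_in.
Qed.

Lemma swap_new_disjoint h : In h (pedges closed) -> ~ In h (pedges opened).
Proof.
  intros H1 H2. unfold pedges in H1. simpl in H1. rewrite map_app in H1.
  assert (H2' : In h (map fst (psteps P))) by (rewrite P_steps, <- app_assoc; apply in_edges_app_l, H2).
  apply in_app_or in H1 as [H1|H1].
  - apply (pl_disjoint _ _ _ I D P (open_in _ _ _ I) UP (not_eq_sym P_neq_D) h); [|exact H2'].
    unfold pedges. rewrite D_steps. apply in_edges_app_l, H1.
  - pose proof (path_edges_NoDup P (proj1 swap_P_stpath)) as NE.
    unfold pedges in NE. rewrite P_steps, <- app_assoc, map_app in NE.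
    apply (NoDup_app_disjoint _ _ h NE H2). right. rewrite map_app. apply in_or_app. right. exact H1.
Qed.

Lemma swap_closed_stpath : stpath G s t closed.
Proof.
  pose proof (open_start _ _ _ I) as SD.
  apply (splice_stpath s t D P d1 d2 _ m2 (open_path _ _ _ I) SD D_steps swap_P_stpath P_steps).
  - rewrite walk_end_app, l1_end. exact d1_end.
  - intros w Hw Hw2. apply (m2_off_D w Hw2). change (In w (walk_verts (pstart D) (psteps D))).
    rewrite SD, D_steps, walk_verts_app. apply in_or_app. left. exact Hw.
Qed.

Lemma reroute_swap : exists U' D', partial_linkage U' D' y /\ residual_walk U' y W.
Proof.
  pose proof (open_path _ _ _ I) as PD. pose proof (open_start _ _ _ I) as SD.
  destruct swap_P_stpath as [PP [SP _]].
  exists (reroute U (fun R => R = D \/ R = P) (fun R => R = closed \/ R = opened)), opened.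
  apply partial_linkage_reroute.
  - left; reflexivity.
  - intros O [-> | ->]; [apply I|exact UP].
  - intros N [-> | ->] a h b Hab; left.
    + unfold path_arc in Hab. simpl in Hab. apply walk_arc_app in Hab as [Hab|Hab].
      * exists D. split; [left; reflexivity|]. unfold path_arc. rewrite SD, D_steps.
        apply walk_arc_app. left. exact Hab.
      * exists P. split; [right; reflexivity|]. unfold path_arc. rewrite SP, P_steps.
        apply walk_arc_app. right. rewrite walk_end_app, l1_end. simpl. rewrite <- d1_end. exact Hab.
    + exists P. split; [right; reflexivity|]. unfold path_arc. rewrite SP, P_steps, <- app_assoc.
      apply walk_arc_app. left. exact Hab.
  - intros R Q [-> | ->] [-> | ->] N h H1 H2; try congruence.
    + exact (swap_new_disjoint h H1 H2).
    + exact (swap_new_disjoint h H2 H1).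
  - intros h O Hh [-> | ->] HO.
    + exists closed. split; [left; reflexivity|]. apply in_edges_app_l.
      apply (path_start_edge D h d1 d2 PD HO); [rewrite SD; exact Hh|exact D_steps|].
      rewrite SD, d1_end. exact swap_meet_not_s.
    + exists opened. split; [right; reflexivity|].
      apply (path_start_edge P h l1 ((g, x) :: m1 ++ m2) PP HO); [rewrite SP; exact Hh| |].
      * rewrite P_steps, <- app_assoc. reflexivity.
      * rewrite SP, l1_end. exact y_neq_s.
  - right; reflexivity.
  - unfold opened. rewrite <- SP. apply (prefix_is_path P l1 ((g, x) :: m1 ++ m2) PP). rewrite P_steps, <- app_assoc.
    reflexivity.
  - reflexivity.
  - rewrite pend_walk_end. exact l1_end.
  - intros N [-> | ->] N'; [exact swap_closed_stpath|contradiction].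
Qed.

End Swap.

End Reroute.

Lemma partial_linkage_step U D x g y W :
  partial_linkage U D x -> residual_walk U x ((g, y) :: W) ->
  NoDup (walk_verts x ((g, y) :: W)) -> walk_end y W = t ->
  exists U' D', partial_linkage U' D' y /\ residual_walk U' y W.
Proof.
  intros I Hr N Ht.
  pose proof (residual_walk_not_s U D x g y W I Hr Ht) as Ys.
  destruct (classic (In y (pverts D))) as [Hy|Hy].
  { exact (reroute_truncate U D x g y W I Hr N Ys Hy). }
  destruct (Hr x g y) as [_ [_ [Hun|[P [UP HP]]]]]; [constructor| |].
  - exact (reroute_extend U D x g y W I Hr N Hy Hun).
  - assert (NPD : P <> D) by (intros ->; apply Hy; exact (walk_arc_tail _ _ _ _ _ HP)).
    destruct (closed_stpath _ _ _ I P UP NPD) as [_ [SP _]].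
    unfold path_arc in HP. rewrite SP in HP. apply walk_arc_split in HP as [l1 [l2 [EP Ey]]].
    assert (Xin : In x (pverts D)).
    { rewrite <- (open_end _ _ _ I), pend_walk_end. apply walk_end_in. }
    destruct (walk_last_within (fun w => In w (pverts D)) x l2 Xin) as [m1 [m2 [-> [Zin Hm2]]]].
    destruct (walk_prefix_at (pstart D) (psteps D) _ Zin) as [d1 [d2 [ED Ez]]].
    rewrite (open_start _ _ _ I) in Ez. rewrite app_comm_cons, app_assoc in EP.
    exact (reroute_swap U D x g y W I Hr N Ys P l1 m1 m2 d1 d2 UP NPD EP Ey ED Ez Hm2).
Qed.

Lemma residual_walk_augments W : forall U D x, partial_linkage U D x -> residual_walk U x W ->
  NoDup (walk_verts x W) -> walk_end x W = t -> exists T, links G s t T /\ ~ uses G T e.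
Proof.
  induction W as [|[g y] W IH]; intros U D x I Hr N Ht.
  - simpl in Ht. subst x. exists U. exact (partial_linkage_links U D I).
  - destruct (partial_linkage_step U D x g y W I Hr N Ht) as [U' [D' [I' Hr']]].
    apply (IH U' D' y I' Hr'); [apply NoDup_cons_iff in N; apply N|exact Ht].
Qed.

End Augment.

(** ** The minimal cut through [e] is tight *)

Section Tight.
Variables s t : V.
Variable e : E.
Hypothesis s_neq_t : s <> t.
Hypothesis e_forced : forall S, links G s t S -> uses G S e.
Hypothesis e_not_at_s : ~ deltav G s e.
Variables (C : E -> Prop) (X : V -> Prop).
Hypothesis C_delta : forall h, C h <-> delta X h.
Hypothesis X_s : X s.
Variable S : path -> Prop.
Hypothesis S_system : ed_system G s t S.
Hypothesis S_orth : orthogonal G C S.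
Hypothesis C_stcut : forall P, stpath G s t P -> exists h, In h (pedges P) /\ C h.
Hypothesis C_min : forall C', EM_stcut G s t C' -> C' e -> cut_le G s t C C'.

Lemma S_stpath Q : S Q -> stpath G s t Q.
Proof. apply S_system. Qed.

Lemma S_cut_edge_unique Q a b : S Q -> In a (pedges Q) -> C a -> In b (pedges Q) -> C b -> a = b.
Proof.
  intros HQ Ha Ca Hb Cb. destruct (proj1 S_orth Q HQ) as [c [_ [_ Hu]]].
  rewrite (Hu a Ha Ca), (Hu b Hb Cb). reflexivity.
Qed.

Lemma S_share_edge Q Q' g : S Q -> S Q' -> In g (pedges Q) -> In g (pedges Q') -> Q = Q'.
Proof.
  intros H1 H2 G1 G2. apply NNPP. intros N. exact (proj2 S_system Q Q' H1 H2 N g G1 G2).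
Qed.

Lemma C_not_inside g : C g -> ~ inside X g.
Proof. intros Cg. apply delta_not_inside, C_delta, Cg. Qed.

Lemma C_not_outside g : C g -> ~ outside X g.
Proof. intros Cg. apply delta_not_outside, C_delta, Cg. Qed.

Lemma C_split_sides P l1 f y l2 : stpath G s t P -> psteps P = l1 ++ (f, y) :: l2 ->
  C f -> edges_avoid C l1 ->
  walk_ok s l1 /\ (forall w, In w (walk_verts s l1) -> X w) /\
  joins f (walk_end s l1) y /\ ~ X y /\ walk_ok y l2.
Proof.
  intros [[W _] [SP _]] EP Cf N. rewrite SP, EP in W. apply walk_ok_app in W as [W1 [J W2]].
  assert (Hin : forall w, In w (walk_verts s l1) -> X w).
  { apply (walk_within X s l1 W1 X_s). intros h Hh Dh. apply (N h Hh), C_delta, Dh. }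
  split; [exact W1|split; [exact Hin|split; [exact J|split; [|exact W2]]]].
  intros Xy. apply (C_not_inside f Cf).
  apply (joins_inside X f _ y J); [apply Hin, walk_end_in|exact Xy].
Qed.

Lemma C_after_outside y l : walk_ok y l -> ~ X y -> edges_avoid C l ->
  forall w, In w (walk_verts y l) -> ~ X w.
Proof.
  intros W Ny N. apply (walk_within (fun w => ~ X w) y l W Ny).
  intros h Hh Dh. apply (N h Hh), C_delta, delta_compl, Dh.
Qed.

Lemma S_split Q f : S Q -> In f (pedges Q) -> C f ->
  exists m1 y m2, psteps Q = m1 ++ (f, y) :: m2 /\ edges_avoid C m1 /\ edges_avoid C m2.
Proof.
  intros HQ Hf Cf.
  pose proof (path_edges_NoDup Q (proj1 (S_stpath Q HQ))) as NE.
  destruct (in_walk_arc (pstart Q) (psteps Q) f Hf) as [a [y Ha]].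
  apply walk_arc_split in Ha as [m1 [m2 [EQ _]]].
  exists m1, y, m2. unfold pedges in NE. rewrite EQ, map_app in NE.
  assert (Hf' : forall h, In h (pedges Q) -> C h -> h = f)
    by (intros h Hh Ch; exact (S_cut_edge_unique Q h f HQ Hh Ch Hf Cf)).
  split; [exact EQ|split]; intros h Hh Ch.
  - assert (h = f) as ->. { apply Hf'; [|exact Ch]. unfold pedges. rewrite EQ. apply in_edges_app_l, Hh. }
    exact (NoDup_app_disjoint _ _ f NE Hh (or_introl eq_refl)).
  - assert (h = f) as ->.
    { apply Hf'; [|exact Ch]. unfold pedges. rewrite EQ. apply in_edges_app_r. right. exact Hh. }
    apply NoDup_remove_2 in NE. apply NE, in_or_app. right. exact Hh.
Qed.

Section Glue.
Variable L : path -> Prop.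
Hypothesis L_links : links G s t L.

(* Follow [P] up to its first [C]-edge [f], then the path [Q] of [S] through
   [f] to [t]. *)
Definition glued (P Q : path) l1 f y l2 m1 m2 (P' : path) : Prop :=
  L P /\ S Q /\ C f /\
  psteps P = l1 ++ (f, y) :: l2 /\ edges_avoid C l1 /\
  psteps Q = m1 ++ (f, y) :: m2 /\ edges_avoid C m1 /\ edges_avoid C m2 /\
  P' = mkPath G s (l1 ++ (f, y) :: m2).

Definition glued_system (P' : path) : Prop :=
  exists P Q l1 f y l2 m1 m2, glued P Q l1 f y l2 m1 m2 P'.

Lemma L_stpath P : L P -> stpath G s t P.
Proof. apply L_links. Qed.

Lemma glued_sides P Q l1 f y l2 m1 m2 P' : glued P Q l1 f y l2 m1 m2 P' ->
  walk_ok s l1 /\ (forall w, In w (walk_verts s l1) -> X w) /\ joins f (walk_end s l1) y /\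
  walk_end s l1 = walk_end s m1 /\ walk_ok y m2 /\ (forall w, In w (walk_verts y m2) -> ~ X w).
Proof.
  intros (LP & SQ & Cf & EP & N1 & EQ & M1 & M2 & _).
  destruct (C_split_sides P l1 f y l2 (L_stpath P LP) EP Cf N1) as (W1 & Hin & J & Ny & _).
  destruct (C_split_sides Q m1 f y m2 (S_stpath Q SQ) EQ Cf M1) as (_ & _ & J' & _ & W2).
  split; [exact W1|split; [exact Hin|split; [exact J|split]]].
  - exact (joins_same_tail f _ _ y J J').
  - split; [exact W2|exact (C_after_outside y m2 W2 Ny M2)].
Qed.

Lemma glued_cut_edge P Q l1 f y l2 m1 m2 P' : glued P Q l1 f y l2 m1 m2 P' ->
  In f (pedges P) /\ In f (pedges Q) /\ In f (pedges P').
Proof.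
  intros (_ & _ & _ & EP & _ & EQ & _ & _ & ->). unfold pedges. rewrite EP, EQ.
  split; [|split]; apply in_edges_app_r; left; reflexivity.
Qed.

Lemma glued_stpath P Q l1 f y l2 m1 m2 P' : glued P Q l1 f y l2 m1 m2 P' -> stpath G s t P'.
Proof.
  intros Hg. destruct (glued_sides _ _ _ _ _ _ _ _ _ Hg) as (_ & Hin & _ & Emeet & _ & Hout).
  destruct Hg as (LP & SQ & _ & EP & _ & EQ & _ & _ & ->).
  destruct (L_stpath P LP) as [PP [SP _]].
  apply (splice_stpath s t P Q l1 ((f, y) :: l2) m1 ((f, y) :: m2) PP SP EP (S_stpath Q SQ) EQ Emeet).
  intros w H1 H2. exact (Hout w H2 (Hin w H1)).
Qed.

Lemma glued_edge_cases P Q l1 f y l2 m1 m2 P' g : glued P Q l1 f y l2 m1 m2 P' ->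
  In g (pedges P') ->
  (In g (pedges P) /\ inside X g) \/ g = f \/ (In g (pedges Q) /\ outside X g).
Proof.
  intros Hg Hin. destruct (glued_sides _ _ _ _ _ _ _ _ _ Hg) as (W1 & HinX & _ & _ & W2 & Hout).
  destruct Hg as (_ & _ & _ & EP & _ & EQ & _ & _ & ->).
  unfold pedges in Hin. simpl in Hin. rewrite map_app in Hin.
  apply in_app_or in Hin as [Hin|[<-|Hin]]; [left|right; left; reflexivity|right; right].
  - split; [unfold pedges; rewrite EP; apply in_edges_app_l, Hin|].
    destruct (in_walk_arc s l1 g Hin) as [a [b Hab]]. exact (walk_inside X s l1 a g b W1 HinX Hab).
  - split; [unfold pedges; rewrite EQ; apply in_edges_app_r; right; exact Hin|].
    destruct (in_walk_arc y m2 g Hin) as [a [b Hab]].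
    exact (walk_inside _ y m2 a g b W2 Hout Hab).
Qed.

Lemma glued_unique P Q l1 f y l2 m1 m2 P1 Q' l1' f' y' l2' m1' m2' P2 :
  glued P Q l1 f y l2 m1 m2 P1 -> glued P Q' l1' f' y' l2' m1' m2' P2 -> P1 = P2.
Proof.
  intros H1 H2.
  destruct (glued_cut_edge _ _ _ _ _ _ _ _ _ H1) as (_ & FQ & _).
  destruct (glued_cut_edge _ _ _ _ _ _ _ _ _ H2) as (_ & FQ' & _).
  destruct H1 as (_ & SQ & Cf & EP & N1 & EQ & M1 & _ & ->).
  destruct H2 as (_ & SQ' & Cf' & EP' & N1' & EQ' & M1' & _ & ->).
  destruct (first_split_unique C l1 f y l2 l1' f' y' l2') as [<- [<- [<- _]]];
    [congruence|auto..].
  assert (Q = Q') as <- by exact (S_share_edge Q Q' f SQ SQ' FQ FQ').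
  destruct (first_split_unique C m1 f y m2 m1' f y m2') as [_ [_ [_ <-]]]; [congruence|auto..].
Qed.

Lemma glued_exists P : L P -> exists Q l1 f y l2 m1 m2 P', glued P Q l1 f y l2 m1 m2 P'.
Proof.
  intros LP. destruct (C_stcut P (L_stpath P LP)) as [h [Hh Ch]].
  destruct (first_split C (psteps P)) as [l1 [f [y [l2 [EP [Cf N1]]]]]]; [exists h; auto|].
  assert (FP : In f (pedges P)) by (unfold pedges; rewrite EP; apply in_edges_app_r; left; auto).
  destruct (proj2 S_orth f Cf) as [Q [SQ FQ]].
  destruct (S_split Q f SQ FQ Cf) as [m1 [y' [m2 [EQ [M1 M2]]]]].
  destruct (C_split_sides P l1 f y l2 (L_stpath P LP) EP Cf N1) as (_ & Hin & J & Ny & _).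
  destruct (C_split_sides Q m1 f y' m2 (S_stpath Q SQ) EQ Cf M1) as (_ & Hin' & J' & _ & _).
  assert (y' = y) as ->.
  { destruct (joins_ends _ _ _ _ _ J J') as [[_ Ey]|[_ Ey]]; [auto|].
    exfalso. apply Ny. rewrite Ey. apply Hin', walk_end_in. }
  exists Q, l1, f, y, l2, m1, m2, (mkPath G s (l1 ++ (f, y) :: m2)).
  repeat split; auto.
Qed.

Lemma glued_disjoint : edge_disjoint glued_system.
Proof.
  intros P1 P2 (P & Q & l1 & f & y & l2 & m1 & m2 & H1)
    (P' & Q' & l1' & f' & y' & l2' & m1' & m2' & H2) N g G1 G2.
  assert (NPP : P <> P') by (intros <-; exact (N (glued_unique _ _ _ _ _ _ _ _ _ _ _ _ _ _ _ _ _ H1 H2))).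
  destruct (glued_cut_edge _ _ _ _ _ _ _ _ _ H1) as (FP & FQ & _).
  destruct (glued_cut_edge _ _ _ _ _ _ _ _ _ H2) as (FP' & FQ' & _).
  pose proof H1 as (LP & SQ & Cf & _). pose proof H2 as (LP' & SQ' & Cf' & _).
  assert (DL : forall h, In h (pedges P) -> ~ In h (pedges P'))
    by exact (proj2 (proj1 L_links) P P' LP LP' NPP).
  assert (DQ : forall h, In h (pedges Q) -> ~ In h (pedges Q')).
  { intros h A B. assert (Q = Q') as <- by exact (S_share_edge Q Q' h SQ SQ' A B).
    assert (f = f') as <- by exact (S_cut_edge_unique Q f f' SQ FQ Cf FQ' Cf').
    exact (DL f FP FP'). }
  destruct (glued_edge_cases _ _ _ _ _ _ _ _ _ g H1 G1) as [[A1 B1]|[E1|[A1 B1]]];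
  destruct (glued_edge_cases _ _ _ _ _ _ _ _ _ g H2 G2) as [[A2 B2]|[E2|[A2 B2]]]; subst.
  all: first [ exact (DL _ A1 A2) | exact (DQ _ A1 A2) | exact (DL _ FP FP')
             | exact (inside_outside X _ B1 B2) | exact (inside_outside X _ B2 B1)
             | exact (C_not_inside _ Cf B2) | exact (C_not_inside _ Cf' B1)
             | exact (C_not_outside _ Cf B2) | exact (C_not_outside _ Cf' B1) ].
Qed.

Lemma glued_links : links G s t glued_system.
Proof.
  split; [split|].
  - intros P' (P & Q & l1 & f & y & l2 & m1 & m2 & Hg). exact (glued_stpath _ _ _ _ _ _ _ _ _ Hg).
  - exact glued_disjoint.
  - intros h Hh. destruct (proj2 L_links h Hh) as [P [LP HP]].
    destruct (glued_exists P LP) as (Q & l1 & f & y & l2 & m1 & m2 & P' & Hg).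
    exists P'. split; [exists P, Q, l1, f, y, l2, m1, m2; exact Hg|].
    destruct (C_split_sides P l1 f y l2) as (_ & _ & _ & Ny & _); try apply Hg; [exact (L_stpath P LP)|].
    destruct Hg as (_ & _ & _ & EP & _ & _ & _ & _ & ->).
    destruct (L_stpath P LP) as [PP [SP _]].
    assert (Hh' : In h (map fst (l1 ++ [(f, y)]))).
    { apply (path_start_edge P h _ l2 PP HP); [rewrite SP; exact Hh| |].
      - rewrite EP, <- app_assoc. reflexivity.
      - rewrite SP, walk_end_rcons. intros ->. exact (Ny X_s). }
    unfold pedges. simpl. rewrite map_app in Hh' |- *. simpl in Hh' |- *.
    apply in_app_or in Hh' as [A|[<-|[]]]; apply in_or_app; [left; exact A|right; left; reflexivity].
Qed.

Section Reach.
Variables (P0 : path) (k1 k2 : list (E * V)) (v : V).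
Hypothesis P0_glued : glued_system P0.
Hypothesis P0_steps : psteps P0 = k1 ++ (e, v) :: k2.

Let u := walk_end s k1.
Let D0 := mkPath G s k1.
Let U0 := reroute glued_system (fun R => R = P0) (fun R => R = D0).

(* Vertices reachable from the tail [u] of [e] in the residual graph of the
   glued system cut open at [e]. *)
Definition reach (b : V) : Prop :=
  exists W, residual_walk e U0 u W /\ NoDup (walk_verts u W) /\ walk_end u W = b.

Lemma P0_stpath : stpath G s t P0.
Proof. exact (proj1 (proj1 glued_links) P0 P0_glued). Qed.

Lemma P0_edges : NoDup (map fst k1 ++ e :: map fst k2).
Proof.
  pose proof (path_edges_NoDup P0 (proj1 P0_stpath)) as N.
  unfold pedges in N. rewrite P0_steps, map_app in N. exact N.
Qed.

Lemma e_notin_k1 : ~ In e (map fst k1).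
Proof. intros H. exact (NoDup_app_disjoint _ _ e P0_edges H (or_introl eq_refl)). Qed.

Lemma e_notin_k2 : ~ In e (map fst k2).
Proof. intros H. apply (NoDup_remove_2 _ _ _ P0_edges), in_or_app. right. exact H. Qed.

Lemma P0_walk : walk_ok s k1 /\ joins e u v /\ walk_ok v k2.
Proof.
  destruct P0_stpath as [[W _] [SP _]]. rewrite SP, P0_steps in W.
  apply walk_ok_app in W. exact W.
Qed.

Lemma u_neq_s : u <> s.
Proof.
  intros Eu. apply e_not_at_s. destruct P0_walk as [_ [J _]].
  apply (joins_delta _ e u v J); [exact Eu|]. intros Ev. apply J. congruence.
Qed.

Lemma in_P0_k1 h : In h (map fst k1) -> In h (pedges P0).
Proof. intros H. unfold pedges. rewrite P0_steps. apply in_edges_app_l, H. Qed.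

Lemma in_P0_k2 h : In h (map fst k2) -> In h (pedges P0).
Proof. intros H. unfold pedges. rewrite P0_steps. apply in_edges_app_r. right. exact H. Qed.

Lemma e_in_P0 : In e (pedges P0).
Proof. unfold pedges. rewrite P0_steps. apply in_edges_app_r. left. reflexivity. Qed.

Lemma k2_unused h : In h (map fst k2) -> forall R, U0 R -> ~ In h (pedges R).
Proof.
  intros H R [[LR NR]| ->] HR.
  - exact (glued_disjoint R P0 LR P0_glued NR h HR (in_P0_k2 h H)).
  - apply (NoDup_app_disjoint _ _ h P0_edges HR). right. exact H.
Qed.

Lemma initial_partial_linkage : partial_linkage s t e U0 D0 u.
Proof.
  destruct P0_stpath as [PP [SP _]].
  constructor.
  - right. reflexivity.
  - unfold D0. rewrite <- SP. exact (prefix_is_path P0 _ _ PP P0_steps).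
  - reflexivity.
  - apply pend_walk_end.
  - intros P [[LP _]| ->] N; [exact (proj1 (proj1 glued_links) P LP)|contradiction].
  - apply edge_disjoint_reroute; [exact glued_disjoint|intros O ->; exact P0_glued|
      apply edge_disjoint_single|].
    intros N h -> Hh. left. exists P0. split; [reflexivity|exact (in_P0_k1 h Hh)].
  - intros h Hh. destruct (proj2 glued_links h Hh) as [P [LP HP]].
    destruct (classic (P = P0)) as [->|N]; [|exists P; split; [left|]; auto].
    exists D0. split; [right; reflexivity|].
    apply (path_start_edge P0 h k1 ((e, v) :: k2) PP HP); [rewrite SP; exact Hh|exact P0_steps|].
    rewrite SP. exact u_neq_s.
  - intros P [[LP NP]| ->] H; [exact (glued_disjoint P P0 LP P0_glued NP e H e_in_P0)|].
    exact (e_notin_k1 H).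
Qed.

Lemma reach_residual a b h : reach a -> residual e U0 a b h -> reach b.
Proof.
  intros [W [Hr [N Ea]]] Hres.
  destruct (classic (In b (walk_verts u W))) as [Hb|Hb].
  - destruct (walk_prefix_at _ _ _ Hb) as [W1 [W2 [-> Eb]]].
    exists W1. split; [|split; [|exact Eb]].
    + intros a' h' b' Hw. apply Hr, walk_arc_app. left. exact Hw.
    + rewrite walk_verts_app in N. eapply NoDup_app_remove_r; eauto.
  - exists (W ++ [(h, b)]). split; [|split; [|apply walk_end_rcons]].
    + intros a' h' b' Hw. apply walk_arc_app in Hw as [Hw|Hw]; [exact (Hr a' h' b' Hw)|].
      rewrite Ea in Hw. destruct (walk_arc_cons_inv _ _ _ _ _ _ _ Hw) as [(-> & -> & ->)|Hw'];
        [exact Hres|inversion Hw'].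
    + rewrite walk_verts_app. apply NoDup_app; [exact N|repeat constructor; auto|].
      intros w H1 [<-|[]]. exact (Hb H1).
Qed.

Lemma reach_u : reach u.
Proof.
  exists []. split; [intros a h b H; inversion H|split; [repeat constructor; auto|reflexivity]].
Qed.

Lemma reach_not_t : ~ reach t.
Proof.
  intros [W [Hr [N Et]]].
  destruct (residual_walk_augments s t e s_neq_t W U0 D0 u initial_partial_linkage Hr N Et)
    as [T [HT NT]].
  exact (NT (e_forced T HT)).
Qed.

Lemma reach_not_v : ~ reach v.
Proof.
  intros Hv. apply reach_not_t.
  destruct P0_stpath as [_ [SP EP]]. rewrite <- EP, pend_walk_end, SP, P0_steps, walk_end_app. simpl.
  apply (walk_forward reach v k2); [|exact Hv|apply walk_end_in].
  intros a h b Hab Ra. apply (reach_residual a b h Ra).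
  split; [apply (walk_arc_joins v k2 a h b); [apply P0_walk|exact Hab]|split].
  - intros ->. exact (e_notin_k2 (walk_arc_edge _ _ _ _ _ Hab)).
  - left. exact (k2_unused h (walk_arc_edge _ _ _ _ _ Hab)).
Qed.

Lemma reach_s : reach s.
Proof.
  apply (walk_backward reach s k1); [|exact reach_u|left; reflexivity].
  intros a h b Hab Rb. apply (reach_residual b a h Rb).
  split; [apply joins_sym, (walk_arc_joins s k1 a h b); [apply P0_walk|exact Hab]|split].
  - intros ->. exact (e_notin_k1 (walk_arc_edge _ _ _ _ _ Hab)).
  - right. exists D0. split; [right; reflexivity|exact Hab].
Qed.

Lemma reach_back P a h b : glued_system P -> path_arc P a h b -> reach b -> reach a.
Proof.
  intros LP Hab Rb. destruct (proj1 (proj1 glued_links) P LP) as [[WP _] [SP _]].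
  assert (J : joins h b a) by exact (joins_sym _ _ _ (walk_arc_joins _ _ _ _ _ WP Hab)).
  apply (reach_residual b a h Rb). split; [exact J|].
  destruct (classic (P = P0)) as [->|N].
  - unfold path_arc in Hab. rewrite SP, P0_steps in Hab.
    apply walk_arc_app in Hab as [Hab|Hab].
    + split; [intros ->; exact (e_notin_k1 (walk_arc_edge _ _ _ _ _ Hab))|].
      right. exists D0. split; [right; reflexivity|exact Hab].
    + destruct (walk_arc_cons_inv _ _ _ _ _ _ _ Hab) as [[_ [_ ->]]|Hab'];
        [exfalso; exact (reach_not_v Rb)|].
      split; [intros ->; exact (e_notin_k2 (walk_arc_edge _ _ _ _ _ Hab'))|].
      left. exact (k2_unused h (walk_arc_edge _ _ _ _ _ Hab')).
  - split; [intros ->; exact (glued_disjoint P P0 LP P0_glued N e (path_arc_edge _ _ _ _ Hab) e_in_P0)|].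
    right. exists P. split; [left; auto|exact Hab].
Qed.

Lemma reach_cut_used d : delta reach d -> exists P, glued_system P /\ In d (pedges P).
Proof.
  intros Hd. destruct (classic (d = e)) as [->|Nde]; [exists P0; split; [exact P0_glued|exact e_in_P0]|].
  destruct (classic (exists R, U0 R /\ In d (pedges R))) as [[R [[[LR _]| ->] HR]]|Hno].
  - exists R. auto.
  - exists P0. split; [exact P0_glued|exact (in_P0_k1 d HR)].
  - exfalso. destruct Hd as [a [b [Ha [Hb [Ra Nb]]]]]. apply Nb.
    apply (reach_residual a b d Ra). split; [|split; [exact Nde|]].
    + split; [exact Ha|split; [exact Hb|]]. intros ->. exact (Nb Ra).
    + left. intros R UR HR. apply Hno. eauto.
Qed.

Lemma reach_cut_EM : EM_stcut G s t (delta reach).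
Proof.
  split; [split|].
  - exists reach. tauto.
  - intros P [[WP _] [SP EP]].
    destruct (walk_crossing reach (pstart P) (psteps P)) as [a [h [b [Hab [Ra Nb]]]]].
    + rewrite SP. exact reach_s.
    + rewrite <- pend_walk_end, EP. exact reach_not_t.
    + exists h. split; [eapply walk_arc_edge; eauto|].
      exact (joins_delta _ h a b (walk_arc_joins _ _ _ _ _ WP Hab) Ra Nb).
  - exists glued_system. split; [apply glued_links|split].
    + intros P LP. destruct (proj1 (proj1 glued_links) P LP) as [[WP _] [SP EP]].
      apply (walk_single_crossing reach (pstart P) (psteps P) WP).
      * intros a h b Hab. exact (reach_back P a h b LP Hab).
      * rewrite SP. exact reach_s.
      * rewrite <- pend_walk_end, EP. exact reach_not_t.
    + exact reach_cut_used.
Qed.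

Lemma reach_cut_e : delta reach e.
Proof. apply (joins_delta _ e u v); [apply P0_walk|exact reach_u|exact reach_not_v]. Qed.

End Reach.

Lemma cut_le_first_after (D : E -> Prop) Q m1 c y m2 : cut_le G s t C D -> is_stcut G s t D ->
  S Q -> psteps Q = m1 ++ (c, y) :: m2 -> C c -> edges_avoid C m1 ->
  exists d, D d /\ In d (pedges Q) /\ (d = c \/ In d (map fst m2)).
Proof.
  intros Hle [_ Dcut] SQ EQ Cc M1. pose proof (S_stpath Q SQ) as PQ.
  destruct (first_split D (psteps Q)) as [r1 [d [yd [r2 [EQ' [Dd R1]]]]]].
  { destruct (Dcut Q PQ) as [h [Hh Dh]]. exists h. auto. }
  exists d. split; [exact Dd|split; [unfold pedges; rewrite EQ'; apply in_edges_app_r; left; auto|]].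
  pose proof (Hle Q PQ _ _ (is_first_split C Q m1 c y m2 EQ Cc M1)
               (is_first_split D Q r1 d yd r2 EQ' Dd R1)) as Hlen.
  rewrite EQ in EQ'. destruct (split_compare _ _ _ _ _ _ EQ' Hlen) as [[Ecd _]|[k [_ Ek]]].
  - left. injection Ecd as <- _. reflexivity.
  - right. rewrite Ek. apply in_edges_app_r. left. reflexivity.
Qed.

Lemma cut_edge_first c : C c ->
  exists P l1 y l2, L P /\ psteps P = l1 ++ (c, y) :: l2 /\ edges_avoid C l1.
Proof.
  intros Cc.
  destruct (e_forced glued_system glued_links) as [P0 [HP0 He]].
  destruct (in_walk_arc (pstart P0) (psteps P0) e He) as [u0 [v Hw]].
  apply walk_arc_split in Hw as [k1 [k2 [EP0 _]]].
  pose proof (reach_cut_EM P0 k1 k2 v HP0 EP0) as HEM.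
  pose proof (C_min _ HEM (reach_cut_e P0 k1 k2 v HP0 EP0)) as Hle.
  destruct (proj2 S_orth c Cc) as [Q [SQ HcQ]].
  destruct (S_split Q c SQ HcQ Cc) as [m1 [y [m2 [EQ [M1 M2]]]]].
  destruct (C_split_sides Q m1 c y m2 (S_stpath Q SQ) EQ Cc M1) as (_ & _ & _ & Ny & W2).
  destruct (cut_le_first_after _ Q m1 c y m2 Hle (proj1 HEM) SQ EQ Cc M1) as [d [Dd [HdQ Hd]]].
  destruct (reach_cut_used P0 k1 k2 v HP0 EP0 d Dd)
    as [P' [(P & Q' & l1 & f & y' & l2 & m1' & m2' & Hg) HdP']].
  destruct (glued_cut_edge _ _ _ _ _ _ _ _ _ Hg) as (_ & FQ' & _).
  pose proof Hg as (LP & SQ' & Cf & EP & N1 & _).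
  assert (f = c) as <-.
  { destruct (glued_edge_cases _ _ _ _ _ _ _ _ _ d Hg HdP') as [[_ Hin]|[<-|[HQ' _]]].
    - exfalso. destruct Hd as [->|Hd]; [exact (C_not_inside c Cc Hin)|].
      destruct (in_walk_arc y m2 d Hd) as [a [b Hab]].
      exact (inside_outside X d Hin (walk_inside _ y m2 a d b W2 (C_after_outside y m2 W2 Ny M2) Hab)).
    - exact (S_cut_edge_unique Q d c SQ HdQ Cf HcQ Cc).
    - assert (Q' = Q) as -> by exact (S_share_edge Q' Q d SQ' SQ HQ' HdQ).
      exact (S_cut_edge_unique Q f c SQ FQ' Cf HcQ Cc). }
  exists P, l1, y', l2. auto.
Qed.

End Glue.

Lemma minimal_cut_tight : tight G s t C.
Proof.
  intros L [HL _]. split.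
  - intros P LP.
    destruct (C_stcut P (proj1 (proj1 HL) P LP)) as [h [Hh Ch]].
    destruct (first_split C (psteps P)) as [l1 [f [y [l2 [EP [Cf N1]]]]]]; [exists h; auto|].
    exists f. split; [unfold pedges; rewrite EP; apply in_edges_app_r; left; auto|split; [exact Cf|]].
    intros h' Hh' Ch'.
    destruct (cut_edge_first L HL h' Ch') as [P2 [l1' [y' [l2' [LP2 [EP2 N1']]]]]].
    destruct (classic (P2 = P)) as [->|N].
    + rewrite EP in EP2. symmetry.
      exact (proj1 (proj2 (first_split_unique C l1 f y l2 l1' h' y' l2' EP2 Cf Ch' N1 N1'))).
    + exfalso. apply (proj2 (proj1 HL) P2 P LP2 LP N h'); [|exact Hh'].
      unfold pedges. rewrite EP2. apply in_edges_app_r. left. reflexivity.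
  - intros c Cc. destruct (cut_edge_first L HL c Cc) as [P [l1 [y [l2 [LP [EP _]]]]]].
    exists P. split; [exact LP|]. unfold pedges. rewrite EP. apply in_edges_app_r. left. reflexivity.
Qed.

End Tight.
End Graph.

Theorem lemma3p8 (G : graph) (s t : vtx G) (e : edg G) :
  s <> t ->
  linked G s t ->
  (forall S, links G s t S -> uses G S e) ->
  ~ deltav G s e ->
  forall C : edg G -> Prop,
    EM_stcut G s t C -> C e ->
    (forall C', EM_stcut G s t C' -> C' e -> cut_le G s t C C') ->
    tight G s t C.
Proof.
  intros Hst _ Hforced Hnot_s C [[[X HX] Hcut] [S [HS HSo]]] _ Hmin.
  destruct (classic (X s)) as [Xs|Xs].
  - exact (minimal_cut_tight G s t e Hst Hforced Hnot_s C X HX Xs S HS HSo Hcut Hmin).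
  - refine (minimal_cut_tight G s t e Hst Hforced Hnot_s C (fun w => ~ X w) _ Xs
              S HS HSo Hcut Hmin).
    intros h. rewrite HX. apply delta_compl.
Qed.
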